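(* Let $d,\alpha,\gamma>0$, $T>0$, $l_0>0$, let $\rho:\mathbb{R}\to(0,\infty)$ be continuously differentiable and $T$-periodic with $\rho(0)=1$, and let $g$ satisfy (A1), (B1), (B2) as in the context. Let $$R_0=\frac{\alpha}{\frac{d\lambda_1}{T}\int_0^T\frac{1}{\rho^2(t)}\,dt-\frac{1}{T}\ln g'(0)},$$ where $\lambda_1=(\pi/l_0)^2$ is the principal Dirichlet eigenvalue of $-\frac{d^2}{dy^2}$ on $(0,l_0)$. If $R_0<1$, then the solution $v(t,y)$ of $$\begin{cases}v_t=\frac{d}{\rho^2(t)}v_{yy}+\left(\alpha-\frac{\dot\rho(t)}{\rho(t)}\right)v-\gamma v^2, & y\in(0,l_0),\ t\in((nT)^+,(n+1)T],\ n=0,1,2,\dots,\\ v(t,0)=v(t,l_0)=0, & t>0,\\ v(0,y)=v_0(y)\ge0,\ v_0\not\equiv0, & y\in(0,l_0),\\ v((nT)^+,y)=g(v(nT,y)), & y\in(0,l_0),\ n=0,1,2,\dots\end{cases}$$ satisfies $\lim_{t\to\infty}v(t,y)=0$ uniformly for $y\in[0,l_0]$.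
   Context: (A1): $g$ is continuously differentiable on $[0,\infty)$, $g(0)=0$, $g'(0)>0$, and for $u>0$: $g(u)>0$, $g(u)/u$ is nonincreasing, $0<g(u)/u<1$. (B1): $g$ is nondecreasing on $[0,\infty)$. (B2): there are positive constants $D$, $\sigma$ and $\nu>1$ such that $g(u)\ge g'(0)u-Du^\nu$ for $0\le u\le\sigma$. $(nT)^+$ denotes the right limit at time $nT$. *)

From Stdlib Require Import Reals Lra.
From Coquelicot Require Import Coquelicot.
Open Scope R_scope.

Definition cont_on_rect (a b l0 : R) (w : R -> R -> R) : Prop :=
  forall t y, a <= t <= b -> 0 <= y <= l0 ->
  forall eps, 0 < eps -> exists delta, 0 < delta /\
    forall t' y', a <= t' <= b -> 0 <= y' <= l0 ->
      Rabs (t' - t) < delta -> Rabs (y' - y) < delta ->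
      Rabs (w t' y' - w t y) < eps.

Definition piece_solves (d alpha gamma : R) (rho rho' : R -> R)
  (a b l0 : R) (w : R -> R -> R) : Prop :=
  cont_on_rect a b l0 w /\
  (exists wt wy wyy : R -> R -> R,
     forall t y, a < t < b -> 0 < y < l0 ->
       is_derive (fun s => w s y) t (wt t y) /\
       is_derive (fun z => w t z) y (wy t y) /\
       is_derive (fun z => wy t z) y (wyy t y) /\
       wt t y = d / (rho t ^ 2) * wyy t y
                + (alpha - rho' t / rho t) * w t y - gamma * (w t y) ^ 2) /\
  (forall t, a < t <= b -> w t 0 = 0 /\ w t l0 = 0).

(* v is a solution of the impulsive problem: on each ((nT)^+, (n+1)T] it
   coincides with a classical solution piece w_n whose initial value
   (= the right limit v((nT)^+, y)) is g(v(nT, y)). *)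
Definition impulsive_solution (d alpha gamma T l0 : R) (rho rho' g : R -> R)
  (v : R -> R -> R) : Prop :=
  forall n : nat, exists w : R -> R -> R,
    piece_solves d alpha gamma rho rho' (INR n * T) (INR (S n) * T) l0 w /\
    (forall y, 0 <= y <= l0 -> w (INR n * T) y = g (v (INR n * T) y)) /\
    (forall t y, INR n * T < t <= INR (S n) * T -> 0 <= y <= l0 ->
       v t y = w t y).

From Stdlib Require Import Reals Lra Lia.
From Coquelicot Require Import Coquelicot.
From mathcomp Require all_boot all_order all_algebra.
From mathcomp Require all_classical all_reals all_analysis Rstruct Rstruct_topology.
Open Scope R_scope.

(* The principal Dirichlet eigenvalue is continuous in the length of the
   interval, so R0 < 1 survives on a slightly longer interval (-dl, l0 + dl),
   whose eigenfunction phi(y) = sin(k (y + dl)) is bounded below on [0, l0].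
   On each period, exp(alpha s - d k^2 tau(s)) phi(y) / rho(t), where
   s = t - nT and tau is the time change int_0^s rho^-2, solves the
   linearised equation; by the maximum principle it dominates the solution,
   which stays nonnegative.  The impulse multiplies the bound by at most
   g'(0) (since g(u)/u is nonincreasing), so across one period the bound
   shrinks by r = g'(0) exp(alpha T - d k^2 tau(T)) < 1, which is exactly the
   condition R0 < 1 on the longer interval. *)

Lemma continuous_eps_delta (f : R -> R) x : continuous f x ->
  forall eps, 0 < eps -> exists delta, 0 < delta /\
    forall x', Rabs (x' - x) < delta -> Rabs (f x' - f x) < eps.
Proof.
  intros Hc eps Heps.
  destruct (Hc (ball (f x) (mkposreal eps Heps)) (locally_ball _ _)) as [delta Hd].
  exists delta; split; [apply cond_pos | intros x' Hx'; exact (Hd x' Hx')].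
Qed.

Lemma cont_on_rect_sub a b a' b' l0 w : a <= a' -> b' <= b ->
  cont_on_rect a b l0 w -> cont_on_rect a' b' l0 w.
Proof.
  intros Ha Hb Hw t y Ht Hy eps Heps.
  destruct (Hw t y ltac:(lra) Hy eps Heps) as [delta [Hd Hw']].
  exists delta; split; [exact Hd | intros t' y' Ht' Hy'; apply Hw'; lra].
Qed.

Lemma cont_on_rect_plus a b l0 u w :
  cont_on_rect a b l0 u -> cont_on_rect a b l0 w ->
  cont_on_rect a b l0 (fun t y => u t y + w t y).
Proof.
  intros Hu Hw t y Ht Hy eps Heps.
  destruct (Hu t y Ht Hy (eps / 2) ltac:(lra)) as [d1 [Hd1 Hu']].
  destruct (Hw t y Ht Hy (eps / 2) ltac:(lra)) as [d2 [Hd2 Hw']].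
  exists (Rmin d1 d2); split; [now apply Rmin_pos |].
  intros t' y' Ht' Hy' Hdt Hdy.
  pose proof (Rmin_l d1 d2); pose proof (Rmin_r d1 d2).
  specialize (Hu' t' y' Ht' Hy' ltac:(lra) ltac:(lra)).
  specialize (Hw' t' y' Ht' Hy' ltac:(lra) ltac:(lra)).
  replace (u t' y' + w t' y' - (u t y + w t y))
    with ((u t' y' - u t y) + (w t' y' - w t y)) by ring.
  pose proof (Rabs_triang (u t' y' - u t y) (w t' y' - w t y)); lra.
Qed.

Lemma cont_on_rect_opp a b l0 w :
  cont_on_rect a b l0 w -> cont_on_rect a b l0 (fun t y => - w t y).
Proof.
  intros Hw t y Ht Hy eps Heps.
  destruct (Hw t y Ht Hy eps Heps) as [delta [Hd Hw']].
  exists delta; split; [exact Hd | intros t' y' Ht' Hy' Hdt Hdy].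
  rewrite <- Rabs_Ropp; replace (- (- w t' y' - - w t y)) with (w t' y' - w t y) by ring.
  auto.
Qed.

Lemma cont_on_rect_mult a b l0 u w :
  cont_on_rect a b l0 u -> cont_on_rect a b l0 w ->
  cont_on_rect a b l0 (fun t y => u t y * w t y).
Proof.
  intros Hu Hw t y Ht Hy eps Heps.
  set (U := Rabs (u t y)); set (W := Rabs (w t y)).
  pose proof (Rabs_pos (u t y)); pose proof (Rabs_pos (w t y)).
  set (e := Rmin 1 (eps / (1 + U + W))).
  assert (He : 0 < e) by (apply Rmin_pos; [lra | apply Rdiv_lt_0_compat; unfold U, W; lra]).
  assert (He1 : e <= 1) by apply Rmin_l.
  assert (He2 : e * (1 + U + W) <= eps).
  { pose proof (Rmin_r 1 (eps / (1 + U + W))) as Hr.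
    apply Rmult_le_compat_r with (r := 1 + U + W) in Hr; [| unfold U, W; lra].
    replace (eps / (1 + U + W) * (1 + U + W)) with eps in Hr by (field; unfold U, W; lra).
    exact Hr. }
  destruct (Hu t y Ht Hy e He) as [d1 [Hd1 Hu']].
  destruct (Hw t y Ht Hy e He) as [d2 [Hd2 Hw']].
  exists (Rmin d1 d2); split; [now apply Rmin_pos |].
  intros t' y' Ht' Hy' Hdt Hdy.
  pose proof (Rmin_l d1 d2); pose proof (Rmin_r d1 d2).
  specialize (Hu' t' y' Ht' Hy' ltac:(lra) ltac:(lra)).
  specialize (Hw' t' y' Ht' Hy' ltac:(lra) ltac:(lra)).
  set (A := u t' y' - u t y) in *; set (B := w t' y' - w t y) in *.
  replace (u t' y' * w t' y' - u t y * w t y)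
    with (A * B + A * w t y + u t y * B) by (unfold A, B; ring).
  pose proof (Rabs_pos A); pose proof (Rabs_pos B).
  assert (Rabs (A * B + A * w t y + u t y * B) <= Rabs A * Rabs B + Rabs A * W + U * Rabs B).
  { unfold U, W; rewrite <- !Rabs_mult.
    pose proof (Rabs_triang (A * B + A * w t y) (u t y * B)).
    pose proof (Rabs_triang (A * B) (A * w t y)); lra. }
  assert (Rabs A * Rabs B < e * e).
  { pose proof (Rmult_le_compat_l (Rabs A) (Rabs B) e ltac:(lra) ltac:(lra)).
    pose proof (Rmult_lt_compat_r e (Rabs A) e He Hu'); lra. }
  pose proof (Rmult_le_compat_r W (Rabs A) e ltac:(unfold W; lra) ltac:(lra)).
  pose proof (Rmult_le_compat_l U (Rabs B) e ltac:(unfold U; lra) ltac:(lra)).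
  nra.
Qed.

Lemma cont_on_rect_fun_t a b l0 (f : R -> R) :
  (forall t, a <= t <= b -> continuous f t) -> cont_on_rect a b l0 (fun t _ => f t).
Proof.
  intros Hf t y Ht Hy eps Heps.
  destruct (continuous_eps_delta f t (Hf t Ht) eps Heps) as [delta [Hd Hf']].
  exists delta; auto.
Qed.

Lemma cont_on_rect_fun_y a b l0 (f : R -> R) :
  (forall y, 0 <= y <= l0 -> continuous f y) -> cont_on_rect a b l0 (fun _ y => f y).
Proof.
  intros Hf t y Ht Hy eps Heps.
  destruct (continuous_eps_delta f y (Hf y Hy) eps Heps) as [delta [Hd Hf']].
  exists delta; auto.
Qed.

Module RectangleEVT.
Import all_boot all_order all_algebra all_classical all_reals all_analysis.
Import Rstruct Rstruct_topology.
Import Order.TTheory GRing.Theory Num.Theory.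
Import numFieldNormedType.Exports.
Local Open Scope classical_set_scope.
Local Open Scope ring_scope.

Lemma cont_on_rect_attains_max (a b l0 : R) (w : R -> R -> R) :
  Rle a b -> Rle 0 l0 -> cont_on_rect a b l0 w ->
  exists t0 y0, (Rle a t0 /\ Rle t0 b) /\ (Rle 0 y0 /\ Rle y0 l0) /\
    forall t y, Rle a t /\ Rle t b -> Rle 0 y /\ Rle y l0 -> Rle (w t y) (w t0 y0).
Proof.
move=> /RleP ab /RleP l0ge0 wc.
pose A := (`[a, b] `*` `[0, l0]) : set (R * R)%type.
have A0 : A !=set0 by exists (a, 0); split; rewrite /= in_itv /= lexx ?ab ?l0ge0.
have cA : compact A by apply: compact_setX; apply: segment_compact.
have cf : {within A, continuous (fun p => w p.1 p.2)}.
  apply/subspace_continuousP => -[t y] [/= /itvP ht /itvP hy].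
  apply/(@cvgrPdist_lt _ R^o) => eps /RltP eps0.
  have [||delta [/RltP delta0 hdelta]] := wc t y _ _ eps eps0.
  - by split; apply/RleP; rewrite ht.
  - by split; apply/RleP; rewrite hy.
  apply/nbhs_ballP; exists delta => //= -[t' y'] [/= bt by'] [/= /itvP ht' /itvP hy'].
  rewrite distrC; apply/RltP; apply: hdelta.
  - by split; apply/RleP; rewrite ht'.
  - by split; apply/RleP; rewrite hy'.
  - by apply/RltP; move: bt; rewrite /ball /= distrC.
  - by apply/RltP; move: by'; rewrite /ball /= distrC.
have [[t0 y0] /set_mem [/= /itvP ht0 /itvP hy0] hmax] := compact_EVT_max A0 cA cf.
exists t0, y0; split; first by split; apply/RleP; rewrite ht0.
split; first by split; apply/RleP; rewrite hy0.
move=> t y [/RleP ht1 /RleP ht2] [/RleP hy1 /RleP hy2]; apply/RleP.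
by apply: (hmax (t, y)); apply/mem_set; split; rewrite /= in_itv /= ?ht1 ?ht2 ?hy1 ?hy2.
Qed.

End RectangleEVT.

Lemma cont_on_rect_bounded a b l0 w : a <= b -> 0 <= l0 -> cont_on_rect a b l0 w ->
  exists M, forall t y, a <= t <= b -> 0 <= y <= l0 -> w t y <= M.
Proof.
  intros Hab Hl0 Hw.
  destruct (RectangleEVT.cont_on_rect_attains_max a b l0 w Hab Hl0 Hw)
    as [t0 [y0 [_ [_ Hmax]]]].
  exists (w t0 y0); exact Hmax.
Qed.

Lemma continuous_bounded_below (f : R -> R) a b : a <= b ->
  (forall t, a <= t <= b -> continuous f t) ->
  exists m, forall t, a <= t <= b -> m <= f t.
Proof.
  intros Hab Hf.
  destruct (continuity_ab_min f a b Hab) as [t0 [Hmin _]].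
  { intros t Ht; apply continuity_pt_filterlim, Hf, Ht. }
  exists (f t0); exact Hmin.
Qed.

Lemma continuous_gt_persists_right (f : R -> R) x c : continuous f x -> c < f x ->
  exists x', x < x' /\ c < f x'.
Proof.
  intros Hf Hc.
  destruct (continuous_eps_delta f x Hf (f x - c) ltac:(lra)) as [delta [Hd Hdelta]].
  exists (x + delta / 2); split; [lra |].
  specialize (Hdelta (x + delta / 2) ltac:(rewrite Rabs_right; lra)).
  apply Rabs_def2 in Hdelta; lra.
Qed.

Lemma exp_le x y : x <= y -> exp x <= exp y.
Proof.
  intros [Hlt | ->]; [left; apply exp_increasing, Hlt | right; reflexivity].
Qed.

Lemma sin_shifted_bounds k dl l0 y : 0 < dl -> 0 < l0 -> k * (l0 + 2 * dl) = PI ->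
  0 <= y <= l0 -> 0 < sin (k * dl) <= sin (k * (y + dl)).
Proof.
  intros Hdl Hl0 Hk Hy; pose proof PI_RGT_0.
  assert (Hk0 : 0 < k).
  { destruct (Rle_or_lt k 0) as [Hk' | Hk']; [| exact Hk'].
    pose proof (Rmult_le_compat_r (l0 + 2 * dl) k 0 ltac:(lra) Hk'); lra. }
  pose proof (Rmult_lt_0_compat k dl Hk0 Hdl); pose proof (Rmult_lt_0_compat k l0 Hk0 Hl0).
  pose proof (Rmult_le_pos k y ltac:(lra) ltac:(lra)).
  pose proof (Rmult_le_compat_l k y l0 ltac:(lra) ltac:(lra)).
  set (th := k * (y + dl)).
  assert (Hth : k * dl <= th <= PI - k * dl) by (unfold th; lra).
  split; [apply sin_gt_0; lra |].
  destruct (Rle_or_lt th (PI / 2)) as [Hle | Hgt].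
  - destruct (Req_dec th (k * dl)) as [-> | Hne]; [lra |].
    left; apply sin_increasing_1; lra.
  - rewrite <- (sin_PI_x th).
    destruct (Req_dec (PI - th) (k * dl)) as [-> | Hne]; [lra |].
    left; apply sin_increasing_1; lra.
Qed.

Lemma exists_period_index T t : 0 < T -> 0 < t ->
  exists n, INR n * T < t <= INR (S n) * T.
Proof.
  intros HT Ht.
  destruct (nfloor_ex (t / T)) as [m [_ Hm]]; [apply Rlt_le, Rdiv_lt_0_compat; lra |].
  assert (Htm : t <= INR (S m) * T).
  { rewrite S_INR; apply Rmult_lt_compat_r with (r := T) in Hm; [| exact HT].
    unfold Rdiv in Hm; rewrite Rmult_assoc, Rinv_l, Rmult_1_r in Hm; lra. }
  clear Hm; induction m as [| m IH].
  - exists 0%nat; simpl in *; lra.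
  - destruct (Rle_or_lt t (INR (S m) * T)) as [Hle | Hlt]; [exact (IH Hle) |].
    exists (S m); split; assumption.
Qed.

Lemma at_right_0_eps (h : R -> R) l : filterlim h (at_right 0) (locally l) ->
  forall eps, 0 < eps -> exists delta, 0 < delta /\
    forall u, 0 < u < delta -> Rabs (h u - l) < eps.
Proof.
  intros Hl eps Heps.
  destruct (Hl (ball l (mkposreal eps Heps)) (locally_ball _ _)) as [delta Hd].
  exists delta; split; [apply cond_pos |]; intros u Hu.
  apply (Hd u); [| lra].
  unfold ball; simpl; unfold AbsRing_ball, abs, minus, plus, opp; simpl.
  rewrite Ropp_0, Rplus_0_r, Rabs_right; lra.
Qed.

Lemma noninc_le_right_limit (h : R -> R) l : filterlim h (at_right 0) (locally l) ->
  (forall u1 u2, 0 < u1 -> u1 <= u2 -> h u2 <= h u1) -> forall u, 0 < u -> h u <= l.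
Proof.
  intros Hl Hh u Hu.
  destruct (Rle_or_lt (h u) l) as [Hle | Hgt]; [exact Hle | exfalso].
  destruct (at_right_0_eps h l Hl (h u - l) ltac:(lra)) as [delta [Hd Hdelta]].
  set (u' := Rmin (delta / 2) u).
  pose proof (Rmin_l (delta / 2) u); pose proof (Rmin_r (delta / 2) u).
  pose proof (Rmin_pos (delta / 2) u ltac:(lra) Hu).
  specialize (Hdelta u' ltac:(unfold u'; lra)); apply Rabs_def2 in Hdelta.
  specialize (Hh u' u ltac:(unfold u'; lra) ltac:(unfold u'; lra)); lra.
Qed.

Lemma right_limit_le (h : R -> R) l c : filterlim h (at_right 0) (locally l) ->
  (forall u, 0 < u -> h u <= c) -> l <= c.
Proof.
  intros Hl Hh.
  destruct (Rle_or_lt l c) as [Hle | Hgt]; [exact Hle | exfalso].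
  destruct (at_right_0_eps h l Hl (l - c) ltac:(lra)) as [delta [Hd Hdelta]].
  specialize (Hdelta (delta / 2) ltac:(lra)); apply Rabs_def2 in Hdelta.
  specialize (Hh (delta / 2) ltac:(lra)); lra.
Qed.

Lemma is_derive_quotient_pos (f : R -> R) x c : is_derive f x c -> 0 < c ->
  exists delta, 0 < delta /\
    forall h, h <> 0 -> Rabs h < delta -> 0 < (f (x + h) - f x) / h.
Proof.
  intros Hf Hc; apply is_derive_Reals in Hf.
  destruct (Hf c Hc) as [delta Hd].
  exists delta; split; [apply cond_pos |].
  intros h Hh0 Hh; specialize (Hd h Hh0 Hh); apply Rabs_def2 in Hd; lra.
Qed.

Lemma is_derive_ge0_at_left_max (f : R -> R) x c r : 0 < r -> is_derive f x c ->
  (forall s, x - r <= s <= x -> f s <= f x) -> 0 <= c.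
Proof.
  intros Hr Hf Hmax.
  destruct (Rle_or_lt 0 c) as [Hc | Hc]; [exact Hc | exfalso].
  destruct (is_derive_quotient_pos (fun s => - f s) x (- c))
    as [delta [Hd Hq]]; [exact (is_derive_opp f x c Hf) | lra |].
  set (h := - Rmin delta r / 2).
  pose proof (Rmin_l delta r); pose proof (Rmin_r delta r).
  pose proof (Rmin_pos delta r Hd Hr).
  assert (Hh : Rabs h < delta) by (unfold h; rewrite Rabs_left; lra).
  specialize (Hq h ltac:(unfold h; lra) Hh).
  specialize (Hmax (x + h) ltac:(unfold h; lra)).
  assert (h < 0) by (unfold h; lra).
  assert (- f (x + h) - - f x = (- f (x + h) - - f x) / h * h) by (field; lra).
  nra.
Qed.

Lemma is_derive_eq0_at_interior_max (f : R -> R) p q x c : p < x < q ->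
  is_derive f x c -> (forall s, p < s < q -> f s <= f x) -> c = 0.
Proof.
  intros Hx Hf Hmax; apply is_derive_Reals in Hf.
  rewrite <- (derive_pt_eq_0 f x c (exist _ c Hf) Hf).
  apply (deriv_maximum f p q x); try lra.
  intros s Hs1 Hs2; apply Hmax; lra.
Qed.

Lemma second_derivative_le0_at_interior_max (f f' : R -> R) p q x c : p < x < q ->
  (forall s, p < s < q -> is_derive f s (f' s)) -> is_derive f' x c ->
  (forall s, p < s < q -> f s <= f x) -> c <= 0.
Proof.
  intros Hx Hf Hf' Hmax.
  assert (Hcrit : f' x = 0)
    by exact (is_derive_eq0_at_interior_max f p q x _ Hx (Hf x Hx) Hmax).
  destruct (Rle_or_lt c 0) as [Hc | Hc]; [exact Hc | exfalso].
  destruct (is_derive_quotient_pos f' x c Hf' Hc) as [delta [Hd Hq]].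
  set (h := Rmin delta (q - x) / 2).
  pose proof (Rmin_l delta (q - x)); pose proof (Rmin_r delta (q - x)).
  pose proof (Rmin_pos delta (q - x) Hd ltac:(lra)).
  destruct (MVT_cor2 f f' x (x + h)) as [xi [Hmvt Hxi]]; [unfold h; lra | |].
  { intros s Hs; apply is_derive_Reals, Hf; unfold h in Hs; lra. }
  specialize (Hq (xi - x) ltac:(lra) ltac:(rewrite Rabs_right; unfold h in *; lra)).
  replace (x + (xi - x)) with xi in Hq by ring; rewrite Hcrit in Hq.
  assert (Hpos : 0 < f' xi).
  { assert (f' xi - 0 = (f' xi - 0) / (xi - x) * (xi - x)) by (field; lra); nra. }
  specialize (Hmax (x + h) ltac:(unfold h; lra)).
  assert (0 < h) by (unfold h; lra); nra.
Qed.

Definition partials_on (a b l0 : R) (w wt wy wyy : R -> R -> R) : Prop :=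
  forall t y, a < t < b -> 0 < y < l0 ->
    is_derive (fun s => w s y) t (wt t y) /\
    is_derive (fun x => w t x) y (wy t y) /\
    is_derive (fun x => wy t x) y (wyy t y).

Section WeakMaximumPrinciple.

Variables (a b l0 H : R) (D : R -> R) (z zt zy zyy : R -> R -> R).
Hypotheses (Hz : cont_on_rect a b l0 z) (Hpart : partials_on a b l0 z zt zy zyy)
  (HD : forall t, a < t < b -> 0 < D t)
  (Hsub : forall t y, a < t < b -> 0 < y < l0 -> 0 < z t y ->
     zt t y <= D t * zyy t y + H * z t y)
  (Hinit : forall y, 0 <= y <= l0 -> z a y <= 0)
  (Hbdry : forall t, a < t <= b -> z t 0 <= 0 /\ z t l0 <= 0).

(* At a positive maximum of exp(-(H+1)(t-a)) z over [a,t1] x [0,l0] we would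
   have z_t >= (H+1) z and z_yy <= 0; taking t1 < b keeps that maximum where
   the derivatives exist. *)
Lemma max_principle_before_end t1 : a < t1 < b ->
  forall t y, a <= t <= t1 -> 0 <= y <= l0 -> z t y <= 0.
Proof.
  intros Ht1 t y Ht Hy.
  destruct (Rle_or_lt (z t y) 0) as [Hle | Hpos]; [exact Hle | exfalso].
  set (L := H + 1).
  set (e := fun s => exp (- L * (s - a))).
  assert (He_pos : forall s, 0 < e s) by (intros; apply exp_pos).
  assert (He_der : forall s, is_derive e s (- L * e s)).
  { intros s; unfold e; auto_derive; [exact I | now rewrite Rmult_1_r]. }
  set (zz := fun s x => e s * z s x).
  assert (Hzz : cont_on_rect a t1 l0 zz).
  { apply cont_on_rect_mult.
    - apply cont_on_rect_fun_t; intros s _.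
      apply (ex_derive_continuous e); eexists; apply He_der.
    - apply (cont_on_rect_sub a b); [lra | lra | exact Hz]. }
  destruct (RectangleEVT.cont_on_rect_attains_max a t1 l0 zz ltac:(lra) ltac:(lra) Hzz)
    as [t0 [y0 [Ht0 [Hy0 Hmax]]]].
  assert (Hz0 : 0 < z t0 y0).
  { specialize (Hmax t y ltac:(lra) Hy); unfold zz in Hmax.
    pose proof (He_pos t); pose proof (He_pos t0); nra. }
  assert (Ht0' : a < t0).
  { destruct (Req_dec t0 a) as [-> | ]; [specialize (Hinit y0 Hy0); lra | lra]. }
  assert (Hy0' : 0 < y0 < l0).
  { destruct (Hbdry t0 ltac:(lra)) as [B0 B1].
    destruct (Req_dec y0 0) as [-> | ]; [lra |].
    destruct (Req_dec y0 l0) as [-> | ]; lra. }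
  destruct (Hpart t0 y0 ltac:(lra) Hy0') as [Hzt [_ _]].
  assert (Htime : L * z t0 y0 <= zt t0 y0).
  { assert (0 <= - L * e t0 * z t0 y0 + e t0 * zt t0 y0).
    { apply (is_derive_ge0_at_left_max (fun s => zz s y0) t0 _ (t0 - a)); [lra | |].
      - apply (is_derive_mult e (fun s => z s y0)); [apply He_der | exact Hzt |].
        intros; apply Rmult_comm.
      - intros s Hs; apply Hmax; lra. }
    pose proof (He_pos t0); nra. }
  assert (Hspace : zyy t0 y0 <= 0).
  { apply (second_derivative_le0_at_interior_max (fun x => z t0 x) (zy t0) 0 l0 y0 _ Hy0').
    - intros x Hx; apply (Hpart t0 x ltac:(lra) Hx).
    - apply (Hpart t0 y0 ltac:(lra) Hy0').
    - intros x Hx; specialize (Hmax t0 x ltac:(lra) ltac:(lra)); unfold zz in Hmax.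
      apply Rmult_le_reg_l with (e t0); auto. }
  specialize (Hsub t0 y0 ltac:(lra) Hy0' Hz0).
  pose proof (HD t0 ltac:(lra)).
  assert (D t0 * zyy t0 y0 <= 0) by nra.
  unfold L in Htime; lra.
Qed.

Lemma cont_on_rect_pos_before_end y : a < b -> 0 <= y <= l0 -> 0 < z b y ->
  exists t1, a < t1 < b /\ 0 < z t1 y.
Proof.
  intros Hab Hy Hpos.
  destruct (Hz b y ltac:(lra) Hy (z b y) Hpos) as [delta [Hd Hcont]].
  set (t1 := b - Rmin delta (b - a) / 2).
  pose proof (Rmin_l delta (b - a)); pose proof (Rmin_r delta (b - a)).
  pose proof (Rmin_pos delta (b - a) Hd ltac:(lra)).
  exists t1; split; [unfold t1; lra |].
  specialize (Hcont t1 y ltac:(unfold t1; lra) Hy).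
  rewrite Rabs_left in Hcont by (unfold t1; lra).
  replace (y - y) with 0 in Hcont by ring; rewrite Rabs_R0 in Hcont.
  specialize (Hcont ltac:(unfold t1; lra) Hd); apply Rabs_def2 in Hcont; lra.
Qed.

Lemma weak_maximum_principle : forall t y, a <= t <= b -> 0 <= y <= l0 -> z t y <= 0.
Proof.
  intros t y Ht Hy.
  destruct (Req_dec t a) as [-> | Hta]; [exact (Hinit y Hy) |].
  destruct (Rlt_or_le t b) as [Htb | Htb].
  - exact (max_principle_before_end t ltac:(lra) t y ltac:(lra) Hy).
  - destruct (Rle_or_lt (z t y) 0) as [Hle | Hpos]; [exact Hle | exfalso].
    replace t with b in Hpos by lra.
    destruct (cont_on_rect_pos_before_end y ltac:(lra) Hy Hpos) as [t1 [Ht1 Hz1]].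
    pose proof (max_principle_before_end t1 Ht1 t1 y ltac:(lra) Hy); lra.
Qed.

End WeakMaximumPrinciple.

Lemma partials_on_opp a b l0 w wt wy wyy : partials_on a b l0 w wt wy wyy ->
  partials_on a b l0 (fun t y => - w t y) (fun t y => - wt t y)
    (fun t y => - wy t y) (fun t y => - wyy t y).
Proof.
  intros Hw t y Ht Hy; destruct (Hw t y Ht Hy) as [Ht' [Hy' Hyy]].
  split; [| split]; [exact (is_derive_opp _ _ _ Ht') | exact (is_derive_opp _ _ _ Hy')
                    | exact (is_derive_opp _ _ _ Hyy)].
Qed.

Lemma partials_on_minus a b l0 u ut uy uyy w wt wy wyy :
  partials_on a b l0 u ut uy uyy -> partials_on a b l0 w wt wy wyy ->
  partials_on a b l0 (fun t y => u t y - w t y) (fun t y => ut t y - wt t y)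
    (fun t y => uy t y - wy t y) (fun t y => uyy t y - wyy t y).
Proof.
  intros Hu Hw t y Ht Hy.
  destruct (Hu t y Ht Hy) as [Hut [Huy Huyy]]; destruct (Hw t y Ht Hy) as [Hwt [Hwy Hwyy]].
  split; [| split]; [exact (is_derive_minus _ _ _ _ _ Hut Hwt)
                    | exact (is_derive_minus _ _ _ _ _ Huy Hwy)
                    | exact (is_derive_minus _ _ _ _ _ Huyy Hwyy)].
Qed.

Lemma piece_solves_inv d alpha gamma rho rho' a b l0 w :
  piece_solves d alpha gamma rho rho' a b l0 w ->
  cont_on_rect a b l0 w /\
  (exists wt wy wyy, partials_on a b l0 w wt wy wyy /\
     forall t y, a < t < b -> 0 < y < l0 ->
       wt t y = d / rho t ^ 2 * wyy t y + (alpha - rho' t / rho t) * w t y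
                - gamma * w t y ^ 2) /\
  (forall t, a < t <= b -> w t 0 = 0 /\ w t l0 = 0).
Proof.
  intros [Hc [[wt [wy [wyy Hw]]] Hb]]; split; [exact Hc | split; [| exact Hb]].
  exists wt, wy, wyy; split; intros t y Ht Hy; destruct (Hw t y Ht Hy) as [? [? [? ?]]];
    [split; [| split] |]; assumption.
Qed.

Section ComparisonOnAPiece.

Variables (d alpha gamma : R) (rho rho' : R -> R).
Hypotheses (hd : 0 < d) (hgamma : 0 < gamma) (hrho_pos : forall t, 0 < rho t)
  (hratio_cont : forall t, continuous (fun s => rho' s / rho s) t).

Let diffusion_pos t : 0 < d / rho t ^ 2.
Proof. apply Rdiv_lt_0_compat; [exact hd | apply pow_lt, hrho_pos]. Qed.

Lemma piece_nonneg a b l0 w : a < b ->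
  piece_solves d alpha gamma rho rho' a b l0 w ->
  (forall y, 0 <= y <= l0 -> 0 <= w a y) ->
  forall t y, a <= t <= b -> 0 <= y <= l0 -> 0 <= w t y.
Proof.
  intros Hab Hw Hinit t y Ht Hy.
  destruct (piece_solves_inv _ _ _ _ _ _ _ _ _ Hw)
    as [Hc [[wt [wy [wyy [Hpart Hpde]]]] Hbdry]].
  destruct (continuous_bounded_below (fun s => rho' s / rho s) a b ltac:(lra))
    as [m Hm]; [intros; apply hratio_cont |].
  destruct (cont_on_rect_bounded a b l0 (fun t y => - w t y) ltac:(lra) ltac:(lra))
    as [Z HZ]; [now apply cont_on_rect_opp |].
  enough (- w t y <= 0) by lra.
  apply (weak_maximum_principle a b l0 (alpha - m + gamma * Z) (fun t => d / rho t ^ 2)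
    (fun t y => - w t y) (fun t y => - wt t y) (fun t y => - wy t y) (fun t y => - wyy t y));
    auto using cont_on_rect_opp, partials_on_opp.
  - intros s x Hs Hx Hz; rewrite Hpde by assumption.
    specialize (Hm s ltac:(lra)); specialize (HZ s x ltac:(lra) ltac:(lra)).
    assert ((rho' s / rho s) * - w s x >= m * - w s x) by nra.
    assert (Hsq : w s x ^ 2 <= Z * - w s x).
    { replace (w s x ^ 2) with (- w s x * - w s x) by ring.
      apply Rmult_le_compat_r; lra. }
    pose proof (Rmult_le_compat_l gamma _ _ ltac:(lra) Hsq).
    lra.
  - intros x Hx; specialize (Hinit x Hx); lra.
  - intros s Hs; destruct (Hbdry s Hs) as [-> ->]; lra.
Qed.

Lemma piece_le_supersolution a b l0 w W Wt Wy Wyy : a < b ->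
  piece_solves d alpha gamma rho rho' a b l0 w ->
  cont_on_rect a b l0 W -> partials_on a b l0 W Wt Wy Wyy ->
  (forall t y, a < t < b -> 0 < y < l0 ->
     d / rho t ^ 2 * Wyy t y + (alpha - rho' t / rho t) * W t y <= Wt t y) ->
  (forall t, a < t <= b -> 0 <= W t 0 /\ 0 <= W t l0) ->
  (forall y, 0 <= y <= l0 -> w a y <= W a y) ->
  forall t y, a <= t <= b -> 0 <= y <= l0 -> w t y <= W t y.
Proof.
  intros Hab Hw HWc HWpart HWsuper HWbdry Hinit t y Ht Hy.
  destruct (piece_solves_inv _ _ _ _ _ _ _ _ _ Hw)
    as [Hc [[wt [wy [wyy [Hpart Hpde]]]] Hbdry]].
  destruct (continuous_bounded_below (fun s => rho' s / rho s) a b ltac:(lra))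
    as [m Hm]; [intros; apply hratio_cont |].
  enough (w t y - W t y <= 0) by lra.
  apply (weak_maximum_principle a b l0 (alpha - m) (fun t => d / rho t ^ 2)
    (fun t y => w t y - W t y) (fun t y => wt t y - Wt t y)
    (fun t y => wy t y - Wy t y) (fun t y => wyy t y - Wyy t y));
    auto using partials_on_minus.
  - apply cont_on_rect_plus; [exact Hc | now apply cont_on_rect_opp].
  - intros s x Hs Hx Hz; rewrite Hpde by assumption.
    specialize (Hm s ltac:(lra)); specialize (HWsuper s x Hs Hx).
    assert ((rho' s / rho s) * (w s x - W s x) >= m * (w s x - W s x)) by nra.
    assert (0 <= gamma * w s x ^ 2) by (apply Rmult_le_pos; [lra | apply pow2_ge_0]).
    lra.
  - intros x Hx; specialize (Hinit x Hx); lra.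
  - intros s Hs; destruct (Hbdry s Hs) as [-> ->]; destruct (HWbdry s Hs); lra.
Qed.

End ComparisonOnAPiece.

Definition time_change (rho : R -> R) (s : R) : R := RInt (fun t => 1 / rho t ^ 2) 0 s.

Section TimeChange.

Variable rho : R -> R.
Hypotheses (hrho_pos : forall t, 0 < rho t) (hrho_cont : forall t, continuous rho t).

Let inv_sq_continuous t : continuous (fun s => 1 / rho s ^ 2) t.
Proof.
  apply (continuous_mult (fun _ => 1) (fun s => / rho s ^ 2)); [apply continuous_const |].
  apply continuous_Rinv_comp; [| apply pow_nonzero, Rgt_not_eq, hrho_pos].
  apply (continuous_mult rho (fun s => rho s ^ 1)); [apply hrho_cont |].
  apply (continuous_mult rho (fun _ => 1)); [apply hrho_cont | apply continuous_const].
Qed.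

Let inv_sq_pos t : 0 < 1 / rho t ^ 2.
Proof. apply Rdiv_lt_0_compat; [lra | apply pow_lt, hrho_pos]. Qed.

Lemma is_derive_time_change s : is_derive (time_change rho) s (1 / rho s ^ 2).
Proof.
  apply (is_derive_RInt (fun t => 1 / rho t ^ 2) (time_change rho) 0 s);
    [| apply inv_sq_continuous].
  apply filter_forall; intros b.
  apply (RInt_correct (V := R_CompleteNormedModule)).
  apply (ex_RInt_continuous (V := R_CompleteNormedModule)).
  intros; apply inv_sq_continuous.
Qed.

Lemma time_change_0 : time_change rho 0 = 0.
Proof. exact (RInt_point (V := R_CompleteNormedModule) 0 _). Qed.

Lemma time_change_nonneg s : 0 <= s -> 0 <= time_change rho s.
Proof.
  intros Hs; apply RInt_ge_0; [exact Hs | | intros; left; apply inv_sq_pos].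
  apply (ex_RInt_continuous (V := R_CompleteNormedModule)); intros; apply inv_sq_continuous.
Qed.

Lemma time_change_pos s : 0 < s -> 0 < time_change rho s.
Proof.
  intros Hs; apply RInt_gt_0;
    [exact Hs | intros; apply inv_sq_pos | intros; apply inv_sq_continuous].
Qed.

End TimeChange.

(* Dividing by rho t absorbs the coefficient -rho'/rho, and the time change
   absorbs the factor 1/rho^2 in front of the diffusion. *)
Definition decay_factor (alpha d mu : R) (rho : R -> R) (a t : R) : R :=
  exp (alpha * (t - a) - d * mu * time_change rho (t - a)) / rho t.

Section LinearizedSolution.

Variables (d alpha k dl a : R) (rho rho' : R -> R).
Hypotheses (hrho_pos : forall t, 0 < rho t) (hrho_der : forall t, is_derive rho t (rho' t))
  (ha_period : forall t, rho (t - a) = rho t).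

Let E := decay_factor alpha d (k ^ 2) rho a.

Let hrho_cont (t : R) : continuous rho t.
Proof. apply (ex_derive_continuous rho); eexists; apply hrho_der. Qed.

Lemma is_derive_decay_factor (t : R) :
  is_derive E t (E t * (alpha - d * k ^ 2 / rho t ^ 2 - rho' t / rho t)).
Proof.
  pose proof (is_derive_time_change rho hrho_pos hrho_cont (t - a)) as Htau.
  rewrite ha_period in Htau.
  pose proof (hrho_pos t).
  unfold E, decay_factor; auto_derive.
  - repeat split; [eexists; exact Htau | eexists; apply hrho_der | lra].
  - replace (Derive (fun x => time_change rho x) (t + - a)) with (1 / rho t ^ 2)
      by (symmetry; apply is_derive_unique, Htau).
    replace (Derive (fun x => rho x) t) with (rho' t)
      by (symmetry; apply is_derive_unique, hrho_der).
    replace (k * (k * 1)) with (k ^ 2) by ring.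
    unfold Rminus; field; lra.
Qed.

Lemma decay_factor_start : rho 0 = 1 -> E a = 1.
Proof.
  intros H0; unfold E, decay_factor.
  rewrite Rminus_diag, time_change_0, <- (ha_period a), Rminus_diag, H0.
  replace (alpha * 0 - d * k ^ 2 * 0) with 0 by ring; rewrite exp_0; field.
Qed.

Lemma decay_profile_solves_linearized c s b l0 :
  let W t y := c * E t * sin (k * (y + dl)) in
  cont_on_rect s b l0 W /\
  exists Wt Wy Wyy, partials_on s b l0 W Wt Wy Wyy /\
    forall t y, d / rho t ^ 2 * Wyy t y + (alpha - rho' t / rho t) * W t y = Wt t y.
Proof.
  intros W.
  set (E' t := E t * (alpha - d * k ^ 2 / rho t ^ 2 - rho' t / rho t)).
  split.
  - apply cont_on_rect_mult.
    + apply (cont_on_rect_fun_t s b l0 (fun t => c * E t)); intros x _.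
      apply (ex_derive_continuous (fun t => c * E t)).
      eexists; apply (is_derive_scal E), is_derive_decay_factor.
    + apply (cont_on_rect_fun_y s b l0 (fun y => sin (k * (y + dl)))); intros x _.
      apply (ex_derive_continuous (fun y => sin (k * (y + dl)))); auto_derive; exact I.
  - exists (fun t y => c * E' t * sin (k * (y + dl))),
      (fun t y => c * E t * (k * cos (k * (y + dl)))),
      (fun t y => c * E t * (- k ^ 2 * sin (k * (y + dl)))).
    split.
    + intros t y _ _; split; [| split].
      * apply (is_derive_scal_l (fun x => c * E x) t (c * E' t) (sin (k * (y + dl)))).
        apply (is_derive_scal E), is_derive_decay_factor.
      * apply (is_derive_scal (fun x => sin (k * (x + dl)))); auto_derive; [exact I | ring].
      * apply (is_derive_scal (fun x => k * cos (k * (x + dl))));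
          auto_derive; [exact I | ring].
    + intros t y; unfold W, E'; pose proof (hrho_pos t); field; lra.
Qed.

End LinearizedSolution.

Lemma ratio_noninc_le_linear (g : R -> R) q :
  filterlim (fun u => g u / u) (at_right 0) (locally q) -> g 0 = 0 ->
  (forall u, 0 < u -> 0 < g u) ->
  (forall u1 u2, 0 < u1 -> u1 <= u2 -> g u2 / u2 <= g u1 / u1) ->
  forall u, 0 <= u -> 0 <= g u <= q * u.
Proof.
  intros Hl Hg0 Hpos Hni u Hu.
  destruct (Req_dec u 0) as [-> | Hu0]; [rewrite Hg0; lra |].
  pose proof (noninc_le_right_limit _ _ Hl Hni u ltac:(lra)) as Hratio.
  apply Rmult_le_compat_r with (r := u) in Hratio; [| exact Hu].
  replace (g u / u * u) with (g u) in Hratio by (field; exact Hu0).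
  pose proof (Hpos u ltac:(lra)); lra.
Qed.

(* q <= 1 makes the denominator of R0 positive; without it R0 < 1 would say nothing. *)
Lemma R0_lt_1_gap d alpha T lam I q :
  0 < d -> 0 < T -> 0 < lam -> 0 < I -> 0 < q <= 1 ->
  alpha / (d * lam / T * I - 1 / T * ln q) < 1 -> alpha * T + ln q < d * lam * I.
Proof.
  intros Hd HT Hlam HI Hq HR0.
  assert (Hln : ln q <= 0) by (rewrite <- ln_1; apply ln_le; lra).
  assert (HdI : 0 < d * lam * I) by (repeat apply Rmult_lt_0_compat; assumption).
  replace (d * lam / T * I - 1 / T * ln q) with ((d * lam * I - ln q) / T) in HR0
    by (field; lra).
  assert (Hden : 0 < (d * lam * I - ln q) / T) by (apply Rdiv_lt_0_compat; lra).
  apply Rmult_lt_compat_r with (r := (d * lam * I - ln q) / T) in HR0; [| exact Hden].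
  replace (alpha / ((d * lam * I - ln q) / T) * ((d * lam * I - ln q) / T)) with alpha
    in HR0 by (field; lra).
  apply Rmult_lt_compat_r with (r := T) in HR0; [| exact HT].
  replace (1 * ((d * lam * I - ln q) / T) * T) with (d * lam * I - ln q) in HR0
    by (field; lra).
  lra.
Qed.

Section GeometricDecay.

Variables (d alpha gamma T l0 L q : R) (rho rho' g : R -> R) (v : R -> R -> R).
Hypotheses (hd : 0 < d) (halpha : 0 < alpha) (hgamma : 0 < gamma) (hT : 0 < T)
  (hl0 : 0 < l0) (hL : l0 < L)
  (hrho_pos : forall t, 0 < rho t) (hrho_der : forall t, is_derive rho t (rho' t))
  (hrho'_cont : forall t, continuous rho' t) (hrho_per : forall t, rho (t + T) = rho t)
  (hrho0 : rho 0 = 1)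
  (hq : 0 < q) (hg : forall u, 0 <= u -> 0 <= g u <= q * u)
  (hrate : alpha * T + ln q < d * (PI / L) ^ 2 * time_change rho T)
  (hv0 : forall y, 0 <= y <= l0 -> 0 <= v 0 y)
  (hsol : impulsive_solution d alpha gamma T l0 rho rho' g v).

(* sin(k (y + dl)) is the principal Dirichlet eigenfunction of the longer
   interval (-dl, l0 + dl). *)
Let k := PI / L.
Let dl := (L - l0) / 2.
Let E (n : nat) := decay_factor alpha d (k ^ 2) rho (INR n * T).
Let r := q * exp (alpha * T - d * k ^ 2 * time_change rho T).

Let hrho_cont t : continuous rho t.
Proof. apply (ex_derive_continuous rho); eexists; apply hrho_der. Qed.

Let ratio_continuous t : continuous (fun s => rho' s / rho s) t.
Proof.
  apply (continuous_mult rho' (fun s => / rho s)); [apply hrho'_cont |].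
  apply continuous_Rinv_comp; [apply hrho_cont | apply Rgt_not_eq, hrho_pos].
Qed.

Let period_shift n t : rho (t - INR n * T) = rho t.
Proof.
  induction n as [| n IH]; [f_equal; simpl; ring |].
  rewrite <- IH, <- (hrho_per (t - INR (S n) * T)), S_INR; f_equal; ring.
Qed.

Let profile_bounds y : 0 <= y <= l0 ->
  (0 < sin (k * dl) <= sin (k * (y + dl))) /\ sin (k * (y + dl)) <= 1.
Proof.
  intros Hy; split; [| apply SIN_bound].
  apply (sin_shifted_bounds k dl l0 y);
    [unfold dl; lra | exact hl0 | unfold k, dl; field; lra | exact Hy].
Qed.

Let decay_factor_pos n s : 0 < E n s.
Proof. apply Rdiv_lt_0_compat; [apply exp_pos | apply hrho_pos]. Qed.

Let rate_bounds : 0 < r < 1.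
Proof.
  unfold r; split; [apply Rmult_lt_0_compat; [exact hq | apply exp_pos] |].
  assert (Hexp : exp (alpha * T - d * k ^ 2 * time_change rho T) < exp (- ln q))
    by (apply exp_increasing; unfold k; lra).
  rewrite exp_Ropp, exp_ln in Hexp by exact hq.
  apply Rmult_lt_compat_l with (r := q) in Hexp; [| exact hq].
  rewrite Rinv_r in Hexp by lra; exact Hexp.
Qed.

Lemma piece_between_zero_and_profile n c : 0 <= c ->
  (forall y, 0 <= y <= l0 ->
     0 <= v (INR n * T) y /\ g (v (INR n * T) y) <= c * sin (k * (y + dl))) ->
  forall t y, INR n * T < t <= INR (S n) * T -> 0 <= y <= l0 ->
    0 <= v t y <= c * E n t * sin (k * (y + dl)).
Proof.
  intros Hc Hinit t y Ht Hy.
  destruct (hsol n) as [w [Hw [Hw0 Hwv]]].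
  assert (Hab : INR n * T < INR (S n) * T) by (rewrite S_INR; lra).
  destruct (decay_profile_solves_linearized d alpha k dl (INR n * T) rho rho' hrho_pos
    hrho_der (period_shift n) c (INR n * T) (INR (S n) * T) l0)
    as [HWc [Wt [Wy [Wyy [HWp HWeq]]]]].
  rewrite Hwv by assumption; split.
  - apply (piece_nonneg d alpha gamma rho rho' hd hgamma hrho_pos ratio_continuous
      _ _ l0 w Hab Hw); [| lra | exact Hy].
    intros x Hx; rewrite Hw0 by exact Hx; apply hg, Hinit, Hx.
  - apply (piece_le_supersolution d alpha gamma rho rho' hd hgamma hrho_pos ratio_continuous
      _ _ l0 w _ Wt Wy Wyy Hab Hw HWc HWp); [| | | lra | exact Hy].
    + intros s x _ _; rewrite HWeq; lra.
    + intros s _; pose proof (decay_factor_pos n s) as HEs; unfold E in HEs.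
      destruct (profile_bounds 0) as [[Hmin H0] _]; [lra |].
      destruct (profile_bounds l0) as [[_ H1] _]; [lra |].
      split; apply Rmult_le_pos; try (apply Rmult_le_pos); lra.
    + intros x Hx; rewrite Hw0 by exact Hx.
      unfold E; rewrite (decay_factor_start d alpha k (INR n * T) rho (period_shift n) hrho0).
      rewrite Rmult_1_r.
      exact (proj2 (Hinit x Hx)).
Qed.

Lemma impulse_geometric_bound : exists M, 0 <= M /\
  forall n y, 0 <= y <= l0 ->
    0 <= v (INR n * T) y /\ g (v (INR n * T) y) <= M * r ^ n * sin (k * (y + dl)).
Proof.
  destruct (hsol 0%nat) as [w0 [[Hw0c _] [Hw0i _]]].
  destruct (cont_on_rect_bounded (INR 0 * T) (INR 1 * T) l0 w0) as [Z HZ];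
    [simpl; lra | lra | exact Hw0c |].
  destruct (profile_bounds 0) as [[Hmin _] _]; [lra |].
  set (M := Rmax 0 Z / sin (k * dl)).
  assert (HMmin : M * sin (k * dl) = Rmax 0 Z) by (unfold M; field; lra).
  assert (HM : 0 <= M).
  { unfold M; apply Rmult_le_pos; [apply Rmax_l | left; apply Rinv_0_lt_compat, Hmin]. }
  pose proof rate_bounds.
  exists M; split; [exact HM |].
  induction n as [| n IH]; intros y Hy.
  - split; [simpl; rewrite Rmult_0_l; exact (hv0 y Hy) |].
    rewrite <- Hw0i by exact Hy.
    specialize (HZ (INR 0 * T) y ltac:(simpl; lra) Hy).
    destruct (profile_bounds y Hy) as [[_ Hy'] _].
    pose proof (Rmax_r 0 Z); pose proof (Rmult_le_compat_l M _ _ HM Hy').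
    simpl pow; rewrite Rmult_1_r; lra.
  - assert (HMr : 0 <= M * r ^ n) by (apply Rmult_le_pos; [exact HM | apply pow_le; lra]).
    destruct (piece_between_zero_and_profile n (M * r ^ n) HMr IH (INR (S n) * T) y
      ltac:(rewrite S_INR; lra) Hy) as [Hv Hv'].
    assert (HEn : E n (INR (S n) * T) = exp (alpha * T - d * k ^ 2 * time_change rho T)).
    { unfold E, decay_factor.
      replace (INR (S n) * T - INR n * T) with T by (rewrite S_INR; ring).
      rewrite <- (period_shift (S n) (INR (S n) * T)), Rminus_diag, hrho0; field. }
    rewrite HEn in Hv'.
    split; [exact Hv |].
    destruct (hg _ Hv) as [_ Hgq].
    apply Rmult_le_compat_l with (r := q) in Hv'; [| lra].
    eapply Rle_trans; [exact Hgq |]; eapply Rle_trans; [exact Hv' |].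
    right; unfold r; simpl; ring.
Qed.

Lemma solution_geometric_bound : exists K rate, 0 <= K /\ 0 <= rate < 1 /\
  forall n t y, INR n * T < t <= INR (S n) * T -> 0 <= y <= l0 ->
    Rabs (v t y) <= K * rate ^ n.
Proof.
  destruct impulse_geometric_bound as [M [HM HQ]].
  destruct (continuity_ab_min rho 0 T) as [t0 [Hmin _]];
    [lra | intros; apply continuity_pt_filterlim, hrho_cont |].
  pose proof rate_bounds; pose proof (hrho_pos t0).
  exists (M * exp (alpha * T) / rho t0), r; split; [| split; [lra |]].
  { unfold Rdiv; apply Rmult_le_pos; [apply Rmult_le_pos; [exact HM | left; apply exp_pos] |].
    left; apply Rinv_0_lt_compat; lra. }
  intros n t y Ht Hy.
  assert (HMr : 0 <= M * r ^ n) by (apply Rmult_le_pos; [exact HM | apply pow_le; lra]).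
  destruct (piece_between_zero_and_profile n (M * r ^ n) HMr (HQ n) t y Ht Hy) as [Hv Hv'].
  rewrite Rabs_right by lra.
  assert (HEt : E n t <= exp (alpha * T) / rho t0).
  { unfold E, decay_factor, Rdiv.
    assert (Hs : 0 < t - INR n * T <= T) by (rewrite S_INR in Ht; lra).
    apply Rmult_le_compat;
      [left; apply exp_pos | left; apply Rinv_0_lt_compat, hrho_pos | apply exp_le |].
    - pose proof (time_change_nonneg rho hrho_pos hrho_cont (t - INR n * T) ltac:(lra)).
      pose proof (pow2_ge_0 k).
      assert (0 <= d * k ^ 2 * time_change rho (t - INR n * T))
        by (apply Rmult_le_pos; [apply Rmult_le_pos |]; lra).
      pose proof (Rmult_le_compat_l alpha _ _ ltac:(lra) (proj2 Hs)); lra.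
    - apply Rinv_le_contravar; [lra |].
      rewrite <- (period_shift n t); apply Hmin; lra. }
  destruct (profile_bounds y Hy) as [_ Hphi1].
  pose proof (decay_factor_pos n t).
  assert (M * r ^ n * E n t * sin (k * (y + dl)) <= M * r ^ n * E n t).
  { rewrite <- (Rmult_1_r (M * r ^ n * E n t)) at 2.
    apply Rmult_le_compat_l; [apply Rmult_le_pos; lra | exact Hphi1]. }
  assert (M * r ^ n * E n t <= M * r ^ n * (exp (alpha * T) / rho t0))
    by (apply Rmult_le_compat_l; assumption).
  replace (M * exp (alpha * T) / rho t0 * r ^ n)
    with (M * r ^ n * (exp (alpha * T) / rho t0)) by (unfold Rdiv; ring).
  lra.
Qed.

End GeometricDecay.

Lemma geometric_bound_uniform_decay T l0 K r (v : R -> R -> R) :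
  0 < T -> 0 <= K -> 0 <= r < 1 ->
  (forall n t y, INR n * T < t <= INR (S n) * T -> 0 <= y <= l0 ->
     Rabs (v t y) <= K * r ^ n) ->
  forall eps, 0 < eps ->
    exists M, forall t y, M <= t -> 0 <= y <= l0 -> Rabs (v t y) < eps.
Proof.
  intros HT HK Hr Hv eps Heps.
  destruct (pow_lt_1_zero r ltac:(rewrite Rabs_right; lra) (eps / (K + 1)))
    as [N HN]; [apply Rdiv_lt_0_compat; lra |].
  exists (INR (S N) * T); intros t y Ht Hy.
  assert (HSN : 0 < INR (S N) * T)
    by (apply Rmult_lt_0_compat; [apply lt_0_INR; lia | exact HT]).
  destruct (exists_period_index T t HT ltac:(lra)) as [n Hn].
  assert (HnN : (N <= n)%nat).
  { destruct (Nat.le_gt_cases N n) as [Hle | Hgt]; [exact Hle | exfalso].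
    assert (HnN : INR (S n) <= INR N) by (apply le_INR; lia).
    pose proof (Rmult_le_compat_r T _ _ ltac:(lra) HnN).
    rewrite S_INR in Ht; lra. }
  specialize (HN n HnN); rewrite Rabs_right in HN by (apply Rle_ge, pow_le; lra).
  eapply Rle_lt_trans; [exact (Hv n t y Hn Hy) |].
  apply Rle_lt_trans with (K * (eps / (K + 1))); [apply Rmult_le_compat_l; lra |].
  apply Rmult_lt_reg_r with (K + 1); [lra |].
  replace (K * (eps / (K + 1)) * (K + 1)) with (K * eps) by (field; lra); nra.
Qed.

Theorem theorem3p2
  (d alpha gamma T l0 : R) (rho rho' g g' : R -> R) (v : R -> R -> R)
  (hd : 0 < d) (halpha : 0 < alpha) (hgamma : 0 < gamma)
  (hT : 0 < T) (hl0 : 0 < l0)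
  (* rho : R -> (0,oo), C^1, T-periodic, rho(0) = 1 *)
  (hrho_pos : forall t, 0 < rho t)
  (hrho_der : forall t, is_derive rho t (rho' t))
  (hrho'_cont : forall t, continuous rho' t)
  (hrho_per : forall t, rho (t + T) = rho t)
  (hrho0 : rho 0 = 1)
  (* g is C^1 on [0,oo) with derivative g' (one-sided at 0) *)
  (hg_der : forall u, 0 < u -> is_derive g u (g' u))
  (hg_der0 : filterlim (fun h => (g h - g 0) / h) (at_right 0) (locally (g' 0)))
  (hg'_cont : forall u, 0 <= u ->
     filterlim g' (within (fun x => 0 <= x) (locally u)) (locally (g' u)))
  (* (A1) *)
  (hg0 : g 0 = 0) (hg'0 : 0 < g' 0)
  (hg_pos : forall u, 0 < u -> 0 < g u)
  (hg_ratio_noninc : forall u1 u2, 0 < u1 -> u1 <= u2 -> g u2 / u2 <= g u1 / u1)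
  (hg_ratio : forall u, 0 < u -> 0 < g u / u < 1)
  (* (B1) *)
  (hg_mono : forall u1 u2, 0 <= u1 -> u1 <= u2 -> g u1 <= g u2)
  (* (B2) *)
  (hB2 : exists D sigma nu, 0 < D /\ 0 < sigma /\ 1 < nu /\
     forall u, 0 < u <= sigma -> g u >= g' 0 * u - D * Rpower u nu)
  (* R0 < 1, with lambda1 = (PI/l0)^2 *)
  (hR0 : alpha / (d * (PI / l0) ^ 2 / T * RInt (fun t => 1 / (rho t) ^ 2) 0 T
                  - 1 / T * ln (g' 0)) < 1)
  (* initial datum v0 = v(0,.) >= 0, not identically 0 *)
  (hv0_nonneg : forall y, 0 <= y <= l0 -> 0 <= v 0 y)
  (hv0_nz : exists y, 0 < y < l0 /\ v 0 y <> 0)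
  (hsol : impulsive_solution d alpha gamma T l0 rho rho' g v) :
  forall eps, 0 < eps -> exists M, forall t y, M <= t -> 0 <= y <= l0 ->
    Rabs (v t y) < eps.
Proof.
  assert (hrho_cont : forall t, continuous rho t)
    by (intros t; apply (ex_derive_continuous rho); eexists; apply hrho_der).
  assert (hratio : filterlim (fun u => g u / u) (at_right 0) (locally (g' 0))).
  { apply (filterlim_ext (fun u => (g u - g 0) / u)); [| exact hg_der0].
    intros u; rewrite hg0, Rminus_0_r; reflexivity. }
  assert (hq1 : g' 0 <= 1)
    by (apply (right_limit_le _ _ 1 hratio); intros u hu; left; apply hg_ratio, hu).
  assert (hI : 0 < time_change rho T) by exact (time_change_pos rho hrho_pos hrho_cont T hT).
  assert (hgap : alpha * T + ln (g' 0) < d * (PI / l0) ^ 2 * time_change rho T).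
  { apply (R0_lt_1_gap d alpha T); [exact hd | exact hT | | exact hI | lra | exact hR0].
    apply pow_lt, Rdiv_lt_0_compat; [exact PI_RGT_0 | exact hl0]. }
  assert (hcont : continuous (fun L => d * (PI / L) ^ 2 * time_change rho T) l0).
  { apply (ex_derive_continuous (fun L => d * (PI / L) ^ 2 * time_change rho T)).
    auto_derive; lra. }
  destruct (continuous_gt_persists_right _ l0 _ hcont hgap) as [L [hL hrate]].
  destruct (solution_geometric_bound d alpha gamma T l0 L (g' 0) rho rho' g v hd halpha hgamma
    hT hl0 hL hrho_pos hrho_der hrho'_cont hrho_per hrho0 hg'0
    (ratio_noninc_le_linear g (g' 0) hratio hg0 hg_pos hg_ratio_noninc) hrate hv0_nonneg hsol)
    as [K [r [hK [hr hv]]]].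
  exact (geometric_bound_uniform_decay T l0 K r v hT hK hr hv).
Qed.
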